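(* Let $G$ be a group satisfying the law $[x^2,y^2]=1$ (i.e. $[g^2,h^2]=1$ for all $g,h\in G$), and suppose the Klein bottle group $K=\langle a,b\mid b^{-1}ab=a^{-1}\rangle$ is a subgroup of $G$. Then every element of the normal closure $\langle\langle b^2\rangle\rangle$ of $b^2$ in $G$ commutes with every element of $K$.
   Context: $[x,y]=x^{-1}y^{-1}xy$. The normal closure $\langle\langle X\rangle\rangle$ of a subset $X$ of $G$ is the smallest normal subgroup of $G$ containing $X$. *)

From Stdlib Require Import ZArith.
Open Scope Z_scope.

Record is_group {G : Type} (mul : G -> G -> G) (one : G) (inv : G -> G) : Prop := {
  grp_assoc : forall x y z, mul x (mul y z) = mul (mul x y) z;
  grp_mul1 : forall x, mul one x = x;
  grp_mul1r : forall x, mul x one = x;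
  grp_mulV : forall x, mul (inv x) x = one;
  grp_mulVr : forall x, mul x (inv x) = one
}.

Definition commutator {G : Type} (mul : G -> G -> G) (inv : G -> G) (x y : G) : G :=
  mul (mul (mul (inv x) (inv y)) x) y.

Definition is_subgroup {G : Type} (mul : G -> G -> G) (one : G) (inv : G -> G)
  (H : G -> Prop) : Prop :=
  H one /\ (forall x y, H x -> H y -> H (mul x y)) /\ (forall x, H x -> H (inv x)).

Definition is_normal_subgroup {G : Type} (mul : G -> G -> G) (one : G) (inv : G -> G)
  (N : G -> Prop) : Prop :=
  is_subgroup mul one inv N /\ (forall g x, N x -> N (mul (mul (inv g) x) g)).

Definition normal_closure {G : Type} (mul : G -> G -> G) (one : G) (inv : G -> G)
  (X : G -> Prop) (g : G) : Prop :=
  forall N : G -> Prop, is_normal_subgroup mul one inv N ->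
    (forall x, X x -> N x) -> N g.

Definition is_hom {G H : Type} (mulG : G -> G -> G) (mulH : H -> H -> H) (f : G -> H) : Prop :=
  forall x y, f (mulG x y) = mulH (f x) (f y).

(* The Klein bottle group K = < a, b | b^{-1} a b = a^{-1} >, realised by its
   normal forms a^m b^n, (m,n) in Z x Z (the semidirect product Z x| Z):
   b^n a^p = a^{(-1)^n p} b^n, hence
   (a^m b^n)(a^p b^q) = a^{m + (-1)^n p} b^{n+q}. *)
Definition Klein : Type := (Z * Z)%type.
Definition ksgn (n : Z) (p : Z) : Z := if Z.even n then p else - p.
Definition kmul (x y : Klein) : Klein :=
  (fst x + ksgn (snd x) (fst y), snd x + snd y).
Definition kone : Klein := (0, 0).
Definition kinv (x : Klein) : Klein := (- ksgn (snd x) (fst x), - snd x).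
Definition ka : Klein := (1, 0).
Definition kb : Klein := (0, 1).

From Stdlib Require Import ZArith Lia.

(* Let t = b^2 in a group G satisfying [x^2, y^2] = 1, with K = <a, b> embedded
   in G.  The proof has three steps.
   1. Squares and conjugates.  In such a group z^2 commutes with every
      conjugate of z, and if (xz)^2 = z^2 then z^2 also commutes with every
      conjugate of x.  Since (ab)^2 = b^2 in K, t commutes with every
      conjugate of a and of b.
   2. The elements y such that t commutes with every conjugate of y form a
      subgroup of G; it contains a and b, hence all of K.
   3. For any set H, the elements all of whose conjugates centralise H form a
      normal subgroup of G.  By step 2 it contains t when H = K, so it
      contains the normal closure of t, which therefore centralises K.
   The embedding of K need not be injective for this argument. *)

Section Groups.

Context {G : Type} {mul : G -> G -> G} {one : G} {inv : G -> G}.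
Hypothesis HG : is_group mul one inv.

Local Infix "·" := mul (at level 40, left associativity).
Local Notation "x ⁻¹" := (inv x) (at level 2, left associativity, format "x ⁻¹").

Lemma mulKl (x y : G) : x⁻¹ · (x · y) = y.
Proof.
  rewrite (grp_assoc _ _ _ HG), (grp_mulV _ _ _ HG), (grp_mul1 _ _ _ HG).
  reflexivity.
Qed.

Lemma mulVKl (x y : G) : x · (x⁻¹ · y) = y.
Proof.
  rewrite (grp_assoc _ _ _ HG), (grp_mulVr _ _ _ HG), (grp_mul1 _ _ _ HG).
  reflexivity.
Qed.

Lemma inv_unique (x y : G) : x · y = one -> x⁻¹ = y.
Proof.
  intro Hxy.
  rewrite <- (grp_mul1r _ _ _ HG (x⁻¹)), <- Hxy, mulKl.
  reflexivity.
Qed.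

Lemma invK (x : G) : x⁻¹⁻¹ = x.
Proof. apply inv_unique, (grp_mulV _ _ _ HG). Qed.

Lemma invM (x y : G) : (x · y)⁻¹ = y⁻¹ · x⁻¹.
Proof.
  apply inv_unique.
  rewrite <- (grp_assoc _ _ _ HG), mulVKl, (grp_mulVr _ _ _ HG).
  reflexivity.
Qed.

Lemma inv1 : one⁻¹ = one.
Proof. apply inv_unique, (grp_mul1 _ _ _ HG). Qed.

Local Ltac group_simpl :=
  repeat first
   [ rewrite invM | rewrite invK | rewrite inv1
   | rewrite <- (grp_assoc _ _ _ HG)
   | rewrite (grp_mulV _ _ _ HG) | rewrite (grp_mulVr _ _ _ HG)
   | rewrite mulKl | rewrite mulVKl
   | rewrite (grp_mul1 _ _ _ HG) | rewrite (grp_mul1r _ _ _ HG) ].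

Local Ltac group := group_simpl; try reflexivity.

Definition commutes (x y : G) : Prop := x · y = y · x.

Lemma commutes_sym (x y : G) : commutes x y -> commutes y x.
Proof. unfold commutes; auto. Qed.

Lemma commutes_one (t : G) : commutes t one.
Proof. unfold commutes; group. Qed.

Lemma commutes_mul (t x y : G) : commutes t x -> commutes t y -> commutes t (x · y).
Proof.
  unfold commutes; intros Hx Hy.
  rewrite (grp_assoc _ _ _ HG), Hx, <- (grp_assoc _ _ _ HG), Hy, (grp_assoc _ _ _ HG).
  reflexivity.
Qed.

Lemma commutes_inv (t x : G) : commutes t x -> commutes t x⁻¹.
Proof.
  unfold commutes; intro Hx.
  assert (E : x⁻¹ · (t · x · x⁻¹) = x⁻¹ · (x · t · x⁻¹)) by (rewrite Hx; reflexivity).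
  revert E; group_simpl; auto.
Qed.

Lemma commutes_of_commutator (x y : G) : commutator mul inv x y = one -> commutes x y.
Proof.
  unfold commutator, commutes; intro H.
  assert (E : y · (x · (x⁻¹ · y⁻¹ · x · y)) = y · (x · one)) by (rewrite H; reflexivity).
  revert E; group_simpl; auto.
Qed.

Lemma commutes_conj (u v x : G) : commutes u (x · v · x⁻¹) -> commutes (x⁻¹ · u · x) v.
Proof.
  unfold commutes; intro H.
  assert (E : x⁻¹ · (u · (x · v · x⁻¹)) · x = x⁻¹ · (x · v · x⁻¹ · u) · x)
    by (rewrite H; reflexivity).
  revert E; group_simpl; auto.
Qed.

Section SquareLaw.

Hypothesis Hlaw : forall g h : G, commutator mul inv (g · g) (h · h) = one.

Lemma squares_commute (g h : G) : commutes (g · g) (h · h).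
Proof. apply commutes_of_commutator, Hlaw. Qed.

(* z^2 commutes with z and with (wz)^2 = (wzw) z, hence with wzw. *)
Lemma square_commutes_wzw (z w : G) : commutes (z · z) (w · z · w).
Proof.
  replace (w · z · w) with ((w · z) · (w · z) · z⁻¹) by group.
  apply commutes_mul; [apply squares_commute |].
  apply commutes_inv; unfold commutes; group.
Qed.

(* z^2 commutes with every conjugate w z w^-1 = w^2 (w^-1 z w^-1) of z. *)
Lemma square_commutes_conj (z w : G) : commutes (z · z) (w · z · w⁻¹).
Proof.
  replace (w · z · w⁻¹) with ((w · w) · (w⁻¹ · z · w⁻¹)) by group.
  apply commutes_mul; [apply squares_commute | apply square_commutes_wzw].
Qed.

(* If (xz)^2 = z^2, then z^2 commutes with w x w^-1 = (w xz w)(w z w)^-1. *)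
Lemma square_commutes_conj_of_equal_squares (x z w : G) :
  x · z · (x · z) = z · z -> commutes (z · z) (w · x · w⁻¹).
Proof.
  intro Hsq.
  replace (w · x · w⁻¹) with ((w · (x · z) · w) · (w · z · w)⁻¹) by group.
  apply commutes_mul.
  - rewrite <- Hsq; apply square_commutes_wzw.
  - apply commutes_inv, square_commutes_wzw.
Qed.

End SquareLaw.

Definition commutes_with_conjugates (t y : G) : Prop :=
  forall w, commutes t (w · y · w⁻¹).

Lemma commutes_with_conjugates_subgroup (t : G) :
  is_subgroup mul one inv (commutes_with_conjugates t).
Proof.
  split; [| split].
  - intro w; replace (w · one · w⁻¹) with one by group; apply commutes_one.
  - intros x y Hx Hy w.
    replace (w · (x · y) · w⁻¹) with ((w · x · w⁻¹) · (w · y · w⁻¹)) by group.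
    apply commutes_mul; auto.
  - intros x Hx w.
    replace (w · x⁻¹ · w⁻¹) with (w · x · w⁻¹)⁻¹ by group.
    apply commutes_inv; auto.
Qed.

Definition conjugates_centralise (H : G -> Prop) (g : G) : Prop :=
  forall x h, H h -> commutes (x⁻¹ · g · x) h.

Lemma conjugates_centralise_normal (H : G -> Prop) :
  is_normal_subgroup mul one inv (conjugates_centralise H).
Proof.
  split; [split; [| split] |].
  - intros x h _; replace (x⁻¹ · one · x) with one by group.
    apply commutes_sym, commutes_one.
  - intros u v Hu Hv x h Hh.
    replace (x⁻¹ · (u · v) · x) with ((x⁻¹ · u · x) · (x⁻¹ · v · x)) by group.
    apply commutes_sym, commutes_mul; apply commutes_sym; auto.
  - intros u Hu x h Hh.
    replace (x⁻¹ · u⁻¹ · x) with (x⁻¹ · u · x)⁻¹ by group.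
    apply commutes_sym, commutes_inv, commutes_sym; auto.
  - intros g u Hu x h Hh.
    replace (x⁻¹ · (g⁻¹ · u · g) · x) with ((g · x)⁻¹ · u · (g · x)) by group.
    auto.
Qed.

Lemma normal_closure_centralises (H X : G -> Prop) :
  (forall x, X x -> conjugates_centralise H x) ->
  forall g, normal_closure mul one inv X g -> forall h, H h -> commutes g h.
Proof.
  intros HX g Hg h Hh.
  assert (Hconj : conjugates_centralise H g)
    by exact (Hg _ (conjugates_centralise_normal H) HX).
  specialize (Hconj one h Hh); revert Hconj; group_simpl; auto.
Qed.

Section KleinImage.

Variable phi : Klein -> G.
Hypothesis Hhom : is_hom kmul mul phi.

Lemma hom_one : phi kone = one.
Proof.
  assert (E : (phi kone)⁻¹ · (phi kone · phi kone) = (phi kone)⁻¹ · phi kone)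
    by (rewrite <- Hhom; reflexivity).
  revert E; group_simpl; auto.
Qed.

Lemma powers_in_subgroup (S : G -> Prop) (f : Z -> G) (x : G) :
  is_subgroup mul one inv S -> f 0%Z = one ->
  (forall m, f (Z.succ m) = f m · x) -> S x -> forall m, S (f m).
Proof.
  intros [S1 [SM SV]] f0 fS Sx m.
  induction m as [| m IH | m IH] using Z.peano_ind.
  - rewrite f0; exact S1.
  - rewrite fS; auto.
  - replace (f (Z.pred m)) with (f m · x⁻¹) by (rewrite <- (Z.succ_pred m), fS at 1; group).
    auto.
Qed.

Lemma klein_image_in_subgroup (S : G -> Prop) :
  is_subgroup mul one inv S -> S (phi ka) -> S (phi kb) -> forall k, S (phi k).
Proof.
  intros HS Sa Sb [m n].
  replace (m, n) with (kmul (m, 0%Z) (0%Z, n)) by (unfold kmul, ksgn; simpl; f_equal; lia).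
  rewrite Hhom; apply HS.
  - apply (powers_in_subgroup S (fun m => phi (m, 0%Z)) (phi ka)); auto.
    + exact hom_one.
    + intro p; rewrite <- Hhom; unfold kmul, ka, ksgn; simpl; f_equal.
  - apply (powers_in_subgroup S (fun n => phi (0%Z, n)) (phi kb)); auto.
    + exact hom_one.
    + intro p; rewrite <- Hhom; unfold kmul, kb, ksgn; simpl.
      destruct (Z.even p); f_equal; lia.
Qed.

Lemma klein_square_ab : phi ka · phi kb · (phi ka · phi kb) = phi kb · phi kb.
Proof. rewrite <- !Hhom; reflexivity. Qed.

End KleinImage.

End Groups.

Theorem mainTheorem4
  (G : Type) (mul : G -> G -> G) (one : G) (inv : G -> G)
  (HG : is_group mul one inv)
  (Hlaw : forall g h : G, commutator mul inv (mul g g) (mul h h) = one)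
  (phi : Klein -> G)
  (Hhom : is_hom kmul mul phi)
  (Hinj : forall x y : Klein, phi x = phi y -> x = y) :
  forall g : G,
    normal_closure mul one inv (fun x => x = mul (phi kb) (phi kb)) g ->
    forall k : Klein, mul g (phi k) = mul (phi k) g.
Proof.
  assert (Hb2 : forall k,
    @commutes_with_conjugates G mul inv (mul (phi kb) (phi kb)) (phi k)).
  { apply (klein_image_in_subgroup HG phi Hhom _ (commutes_with_conjugates_subgroup HG _)).
    - intro w; apply (square_commutes_conj_of_equal_squares HG Hlaw).
      apply (klein_square_ab phi Hhom).
    - intro w; apply (square_commutes_conj HG Hlaw). }
  intros g Hg k.
  apply (normal_closure_centralises HG (fun h => exists k, h = phi k)
           (fun x => x = mul (phi kb) (phi kb))); [| exact Hg | exists k; reflexivity].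
  intros x -> w h [k' ->].
  apply (commutes_conj HG), Hb2.
Qed.
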